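(* Let $\Omega\subset\mathbb{P}(\mathbb{R}^d)$ be a properly convex domain and $g\in\mathrm{Aut}(\Omega)$. If $V\subset\mathbb{R}^d$ is a linear subspace with $\dim V>1$, $\Omega\cap\mathbb{P}(V)\neq\emptyset$, and $gV=V$, then $\tau_{\Omega\cap\mathbb{P}(V)}(g)=\tau_\Omega(g)$ (where $g$ acts on $\Omega\cap\mathbb{P}(V)$ by restriction).
   Context: Properly convex domain: open subset of $\mathbb{P}(\mathbb{R}^d)$ which is a bounded convex set in some affine chart; $\Omega\cap\mathbb{P}(V)$ is then a properly convex set open in its span. Hilbert metric on a properly convex set $C$ open in its span: $H_C(x,y)=\frac12\log\frac{|x-b||y-a|}{|x-a||y-b|}$, with $a,b$ the boundary points of $C$ on the line through $x\neq y$ ordered $a,x,y,b$. For $g$ preserving $C$, $\tau_C(g)=\inf_{x\in C}H_C(x,gx)$. *)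

From Stdlib Require Import Reals Lra.
From Stdlib Require Fin.
Open Scope R_scope.

Definition vec (d : nat) := Fin.t d -> R.
Definition vzero {d} : vec d := fun _ => 0.
Definition vadd {d} (u v : vec d) : vec d := fun i => u i + v i.
Definition vscal {d} (c : R) (u : vec d) : vec d := fun i => c * u i.
Definition vsub {d} (u v : vec d) : vec d := fun i => u i - v i.

Definition is_linear {d} (f : vec d -> vec d) : Prop :=
  (forall u v, f (vadd u v) = vadd (f u) (f v)) /\
  (forall c u, f (vscal c u) = vscal c (f u)).
Definition is_linear_form {d} (phi : vec d -> R) : Prop :=
  (forall u v, phi (vadd u v) = phi u + phi v) /\
  (forall c u, phi (vscal c u) = c * phi u).

Definition is_GL {d} (g : vec d -> vec d) : Prop :=
  is_linear g /\ exists h : vec d -> vec d,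
    (forall u, h (g u) = u) /\ (forall u, g (h u) = u).

(** Subsets of P(R^d) are represented by their cones: sets of nonzero vectors
    invariant under nonzero scalings. *)
Definition is_proj_set {d} (S : vec d -> Prop) : Prop :=
  ~ S vzero /\ forall u c, c <> 0 -> (S u <-> S (vscal c u)).

(** Omega is a properly convex domain which is a bounded convex open set in the
    affine chart {phi = 1} (complement of P(ker phi)). *)
Definition properly_convex_in_chart {d} (phi : vec d -> R) (Om : vec d -> Prop) : Prop :=
  is_linear_form phi /\
  is_proj_set Om /\
  (exists u, Om u) /\
  (forall u, Om u -> phi u <> 0) /\
  (forall u, Om u -> exists eps, 0 < eps /\
      forall w : vec d, (forall i, Rabs (w i - u i) < eps) -> Om w) /\
  (forall u v t, Om u -> Om v -> phi u = 1 -> phi v = 1 -> 0 <= t <= 1 ->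
      Om (vadd (vscal (1 - t) u) (vscal t v))) /\
  (exists M, forall u, Om u -> phi u = 1 -> forall i, Rabs (u i) <= M).

Definition is_aut {d} (Om : vec d -> Prop) (g : vec d -> vec d) : Prop :=
  is_GL g /\ forall u, Om u <-> Om (g u).

Definition is_subspace {d} (V : vec d -> Prop) : Prop :=
  V vzero /\ (forall u v, V u -> V v -> V (vadd u v)) /\
  (forall c u, V u -> V (vscal c u)).
Definition dim_gt_1 {d} (V : vec d -> Prop) : Prop :=
  exists u v, V u /\ V v /\
    forall a b, vadd (vscal a u) (vscal b v) = vzero -> a = 0 /\ b = 0.

Definition proj_inter {d} (Om V : vec d -> Prop) : vec d -> Prop :=
  fun u => Om u /\ V u.

Definition is_lower_bound (E : R -> Prop) (m : R) : Prop := forall x, E x -> m <= x.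
Definition is_glb (E : R -> Prop) (m : R) : Prop :=
  is_lower_bound E m /\ forall b, is_lower_bound E b -> b <= m.

Definition chart_rep {d} (phi : vec d -> R) (u : vec d) : vec d := vscal (/ phi u) u.

Definition line_params {d} (C : vec d -> Prop) (x y : vec d) : R -> Prop :=
  fun t => C (vadd x (vscal t (vsub y x))).

(** Hilbert distance H_C([u],[v]) computed in the affine chart {phi = 1}:
    with x, y the chart representatives and the boundary points
    a = x + alpha (y - x), b = x + beta (y - x) (alpha = inf, beta = sup of
    the parameters of the line inside C), one has
    |x-b| = beta|y-x|, |y-a| = (1-alpha)|y-x|, |x-a| = -alpha|y-x|,
    |y-b| = (beta-1)|y-x|, so
    H = 1/2 log (|x-b||y-a| / (|x-a||y-b|)).  H([x],[x]) = 0.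
    hilbert_dist phi C u v r  means  H_C([u],[v]) = r. *)
Definition hilbert_dist {d} (phi : vec d -> R) (C : vec d -> Prop)
    (u v : vec d) (r : R) : Prop :=
  let x := chart_rep phi u in
  let y := chart_rep phi v in
  (x = y /\ r = 0) \/
  (x <> y /\ exists alpha beta,
      is_glb (line_params C x y) alpha /\
      is_lub (line_params C x y) beta /\
      r = / 2 * ln ((beta * (1 - alpha)) / ((- alpha) * (beta - 1)))).

Definition displacements {d} (phi : vec d -> R) (C : vec d -> Prop)
    (g : vec d -> vec d) : R -> Prop :=
  fun r => exists u, C u /\ hilbert_dist phi C u (g u) r.

Definition is_translation_length {d} (phi : vec d -> R) (C : vec d -> Prop)
    (g : vec d -> vec d) (m : R) : Prop :=
  is_glb (displacements phi C g) m.

From Stdlib Require Import Reals Lra Classical FunctionalExtensionality PropExtensionality.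
Open Scope R_scope.

(** A line through two points of Om ∩ P(V)
    meets Om only inside P(V), so the Hilbert metric of Om ∩ P(V) is the
    restriction of that of Om and tau_{Om ∩ P(V)}(g) >= tau_Om(g).  For the
    converse we work in the half K of the cone over Om on which the chart form
    phi is positive, after replacing g by h = +-g so that h K = K, and write
    v < w  when  w - v  lies in K:
    - H(x, h x) = r yields  h x < a x  and  h^-1 x < b x  with a b close to
      exp (2 r); conversely  h y < rho y,  h^-1 y < rho' y  bound H(y, h y) by
      (1/2) ln (rho rho');
    - for any w in K ∩ V, the balanced point
        y = w + sum_{n=1}^N (a q)^-n h^n w + sum_{n=1}^N (b q)^-n h^-n w
      lies in K ∩ V and, for N large, satisfies  h y < a q y  and
      h^-1 y < b q y  (q > 1 arbitrary).
    Hence every displacement in Om is approached by displacements in Om ∩ P(V). *)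

Lemma vec_ext {d} (u v : vec d) : (forall i, u i = v i) -> u = v.
Proof. exact (functional_extensionality u v). Qed.

Ltac vec_unfold := apply vec_ext; intro; unfold vadd, vsub, vscal, vzero.

Lemma coord_bound : forall d (w : vec d), exists B, 0 <= B /\ forall i, Rabs (w i) <= B.
Proof.
  induction d as [|n IH]; intros w.
  - exists 0; split; [lra | intros i; inversion i].
  - destruct (IH (fun i => w (Fin.FS i))) as [B [HB0 HB]].
    exists (Rmax (Rabs (w Fin.F1)) B); split.
    + apply Rle_trans with B; [lra | apply Rmax_r].
    + intros i; pattern i; apply Fin.caseS'.
      * apply Rmax_l.
      * intros j; apply Rle_trans with B; [apply HB | apply Rmax_r].
Qed.

Section Linear.
Context {d : nat}.

Lemma lin_sub (f : vec d -> vec d) : is_linear f -> forall u v, f (vsub u v) = vsub (f u) (f v).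
Proof.
  intros [Hadd Hscal] u v.
  replace (vsub u v) with (vadd u (vscal (-1) v)) by (vec_unfold; ring).
  rewrite Hadd, Hscal; vec_unfold; ring.
Qed.

Lemma lin_zero (f : vec d -> vec d) : is_linear f -> f vzero = vzero.
Proof.
  intros [_ Hscal].
  replace (@vzero d) with (vscal 0 (@vzero d)) by (vec_unfold; ring).
  rewrite Hscal; vec_unfold; ring.
Qed.

Lemma form_sub (f : vec d -> R) : is_linear_form f -> forall u v, f (vsub u v) = f u - f v.
Proof.
  intros [Hadd Hscal] u v.
  replace (vsub u v) with (vadd u (vscal (-1) v)) by (vec_unfold; ring).
  rewrite Hadd, Hscal; ring.
Qed.

Lemma iter_linear (f : vec d -> vec d) n : is_linear f -> is_linear (Nat.iter n f).
Proof.
  intros [Hadd Hscal]; induction n as [|n [IHadd IHscal]]; split; intros; simpl; auto.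
  - rewrite IHadd, Hadd; reflexivity.
  - rewrite IHscal, Hscal; reflexivity.
Qed.

Lemma inverse_linear (f f' : vec d -> vec d) : is_linear f ->
  (forall u, f (f' u) = u) -> (forall u, f' (f u) = u) -> is_linear f'.
Proof.
  intros [Hadd Hscal] Hff' Hf'f; split; intros.
  - rewrite <- (Hf'f (vadd (f' u) (f' v))), Hadd, !Hff'; reflexivity.
  - rewrite <- (Hf'f (vscal c (f' u))), Hscal, Hff'; reflexivity.
Qed.

Lemma scaled_linear (f : vec d -> vec d) s : is_linear f -> is_linear (fun u => vscal s (f u)).
Proof.
  intros [Hadd Hscal]; split; intros; rewrite ?Hadd, ?Hscal; vec_unfold; ring.
Qed.

Lemma scaled_inverse (f f' : vec d -> vec d) s : s * s = 1 -> is_linear f ->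
  (forall u, f (f' u) = u) -> forall u, vscal s (f (vscal s (f' u))) = u.
Proof.
  intros Hs [_ Hscal] Hff' u; rewrite Hscal, Hff'.
  vec_unfold; rewrite <- Rmult_assoc, Hs; ring.
Qed.

End Linear.

Lemma ln_le x y : 0 < x -> x <= y -> ln x <= ln y.
Proof. intros Hx [H | <-]; [left; apply ln_increasing; auto | lra]. Qed.

Lemma glb_exists (E : R -> Prop) :
  (exists x, E x) -> (exists B, forall x, E x -> B <= x) -> exists m, is_glb E m.
Proof.
  intros [x Hx] [B HB].
  destruct (completeness (fun y => E (- y))) as [m [Hub Hlub]].
  - exists (- B); intros y Hy; apply HB in Hy; lra.
  - exists (- x); rewrite Ropp_involutive; auto.
  - exists (- m); split.
    + intros y Hy; assert (- y <= m) by (apply Hub; rewrite Ropp_involutive; auto); lra.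
    + intros b Hb; assert (m <= - b) by (apply Hlub; intros y Hy; apply Hb in Hy; lra); lra.
Qed.

(** For boundary parameters a < 0 < 1 < b of the segment from x (parameter 0) to
    y (parameter 1), exp (2 H(x,y)) is the cross ratio below. *)
Definition cross_ratio (a b : R) : R := (1 + / (- a)) * (1 + / (b - 1)).

Lemma cross_ratio_formula a b : a < 0 -> 1 < b ->
  b * (1 - a) / (- a * (b - 1)) = cross_ratio a b.
Proof. intros; unfold cross_ratio; field; lra. Qed.

Lemma cross_ratio_gt1 a b : a < 0 -> 1 < b -> 1 < cross_ratio a b.
Proof.
  intros; unfold cross_ratio.
  assert (0 < / (- a)) by (apply Rinv_0_lt_compat; lra).
  assert (0 < / (b - 1)) by (apply Rinv_0_lt_compat; lra).
  nra.
Qed.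

Lemma cross_ratio_antitone a t1 b t2 : a <= t1 -> t1 < 0 -> 1 < t2 -> t2 <= b ->
  cross_ratio a b <= cross_ratio t1 t2.
Proof.
  intros; unfold cross_ratio.
  assert (/ (- a) <= / (- t1)) by (apply Rinv_le_contravar; lra).
  assert (/ (b - 1) <= / (t2 - 1)) by (apply Rinv_le_contravar; lra).
  assert (0 < / (- a)) by (apply Rinv_0_lt_compat; lra).
  assert (0 < / (b - 1)) by (apply Rinv_0_lt_compat; lra).
  apply Rmult_le_compat; lra.
Qed.

Lemma cross_ratio_approx a s1 b s2 mu : a < 0 -> 1 < b -> 0 < mu < 1 ->
  a <= s1 < a * mu -> 1 + (b - 1) * mu < s2 <= b ->
  cross_ratio s1 s2 <= cross_ratio a b / (mu * mu).
Proof.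
  intros Ha Hb Hmu Hs1 Hs2; unfold cross_ratio.
  assert (Hinv : 1 <= / mu) by (rewrite <- Rinv_1; apply Rinv_le_contravar; lra).
  assert (E1 : / (- s1) <= / (- a) / mu).
  { replace (/ (- a) / mu) with (/ (- a * mu)) by (field; lra).
    apply Rinv_le_contravar; nra. }
  assert (E2 : / (s2 - 1) <= / (b - 1) / mu).
  { replace (/ (b - 1) / mu) with (/ ((b - 1) * mu)) by (field; lra).
    apply Rinv_le_contravar; nra. }
  assert (0 < / (- a)) by (apply Rinv_0_lt_compat; lra).
  assert (0 < / (b - 1)) by (apply Rinv_0_lt_compat; lra).
  assert (0 < / (- s1)) by (apply Rinv_0_lt_compat; nra).
  assert (0 < / (s2 - 1)) by (apply Rinv_0_lt_compat; nra).
  replace ((1 + / (- a)) * (1 + / (b - 1)) / (mu * mu))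
    with ((1 + / (- a)) / mu * ((1 + / (b - 1)) / mu)) by (field; lra).
  assert (1 + / (- a) / mu <= (1 + / (- a)) / mu) by (unfold Rdiv; nra).
  assert (1 + / (b - 1) / mu <= (1 + / (b - 1)) / mu) by (unfold Rdiv; nra).
  apply Rmult_le_compat; lra.
Qed.

(** With rho = a q, the quantity  K a^{N+1} / rho^N = K a / q^N  is small once
    q^N is large. *)
Lemma scaled_power_small K a q e N : 0 < a -> 0 < q -> 0 < e -> K * a / e < q ^ N ->
  K * a ^ S N / (a * q) ^ N < e.
Proof.
  intros Ha Hq He HN.
  assert (HqN : 0 < q ^ N) by (apply pow_lt; exact Hq).
  assert (HaN : 0 < a ^ N) by (apply pow_lt; exact Ha).
  replace (K * a ^ S N / (a * q) ^ N) with (K * a / q ^ N)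
    by (rewrite Rpow_mult_distr; simpl; field; lra).
  apply Rmult_lt_reg_r with (q ^ N); [exact HqN |].
  replace (K * a / q ^ N * q ^ N) with (K * a) by (field; lra).
  apply Rmult_lt_reg_r with (/ e); [apply Rinv_0_lt_compat; exact He |].
  replace (e * q ^ N * / e) with (q ^ N) by (field; lra).
  exact HN.
Qed.

(** * The cone over a properly convex domain *)

Section ProperlyConvex.
Context {d : nat} (phi : vec d -> R) (Om : vec d -> Prop).
Hypothesis phi_linear : is_linear_form phi.
Hypothesis Om_proj : is_proj_set Om.
Hypothesis phi_nonzero : forall u, Om u -> phi u <> 0.
Hypothesis Om_open : forall u, Om u -> exists eps, 0 < eps /\
  forall w : vec d, (forall i, Rabs (w i - u i) < eps) -> Om w.
Hypothesis Om_convex : forall u v t, Om u -> Om v -> phi u = 1 -> phi v = 1 -> 0 <= t <= 1 ->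
  Om (vadd (vscal (1 - t) u) (vscal t v)).
Hypothesis Om_bounded : exists M, forall u, Om u -> phi u = 1 -> forall i, Rabs (u i) <= M.

Let phi_add := proj1 phi_linear.
Let phi_scal := proj2 phi_linear.

(** The half of the cone over Om on which phi is positive: an open convex cone,
    sharp because Om is bounded in the chart. *)
Definition pos_cone (w : vec d) : Prop := Om w /\ 0 < phi w.

Definition pos_cone0 (w : vec d) : Prop := pos_cone w \/ w = vzero.

Lemma Om_scal u c : Om u -> c <> 0 -> Om (vscal c u).
Proof. intros Hu Hc; exact (proj1 (proj2 Om_proj u c Hc) Hu). Qed.

Lemma chart_rep_phi u : phi u <> 0 -> phi (chart_rep phi u) = 1.
Proof. intros Hu; unfold chart_rep; rewrite phi_scal; field; exact Hu. Qed.

Lemma chart_rep_Om u : Om u -> Om (chart_rep phi u).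
Proof. intros Hu; apply Om_scal; auto using Rinv_neq_0_compat. Qed.

Lemma chart_rep_scal u c : c <> 0 -> phi u <> 0 -> chart_rep phi (vscal c u) = chart_rep phi u.
Proof. intros Hc Hu; unfold chart_rep; rewrite phi_scal; vec_unfold; field; auto. Qed.

Lemma chart_rep_pos_cone u : Om u -> pos_cone (chart_rep phi u).
Proof. intros Hu; split; [apply chart_rep_Om | rewrite chart_rep_phi]; auto; lra. Qed.

Lemma pos_cone_scal u c : pos_cone u -> 0 < c -> pos_cone (vscal c u).
Proof.
  intros [Hu pu] Hc; split; [apply Om_scal; [exact Hu | lra] |].
  rewrite phi_scal; apply Rmult_lt_0_compat; auto.
Qed.

(** Convexity of Om in the chart makes the cone closed under addition. *)
Lemma pos_cone_add u v : pos_cone u -> pos_cone v -> pos_cone (vadd u v).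
Proof.
  intros [Hu pu] [Hv pv].
  set (t := phi v / (phi u + phi v)).
  assert (Ht : 0 <= t <= 1).
  { assert (1 - t = phi u / (phi u + phi v)) by (unfold t; field; lra).
    assert (0 < t) by (apply Rdiv_lt_0_compat; lra).
    assert (0 < phi u / (phi u + phi v)) by (apply Rdiv_lt_0_compat; lra).
    lra. }
  pose proof (Om_convex _ _ t (chart_rep_Om u Hu) (chart_rep_Om v Hv)
    (chart_rep_phi u (Rgt_not_eq _ _ pu)) (chart_rep_phi v (Rgt_not_eq _ _ pv)) Ht) as Hw.
  split; [| rewrite phi_add; lra].
  replace (vadd u v) with (vscal (phi u + phi v)
    (vadd (vscal (1 - t) (chart_rep phi u)) (vscal t (chart_rep phi v)))).
  - apply Om_scal; [exact Hw | lra].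
  - unfold chart_rep, t; vec_unfold; field; lra.
Qed.

Lemma pos_cone_add0 u v : pos_cone u -> pos_cone0 v -> pos_cone (vadd u v).
Proof.
  intros Hu [Hv | ->]; [apply pos_cone_add; auto |].
  replace (vadd u vzero) with u by (vec_unfold; ring); exact Hu.
Qed.

Lemma pos_cone0_add u v : pos_cone0 u -> pos_cone0 v -> pos_cone0 (vadd u v).
Proof.
  intros [Hu | ->] Hv.
  - left; apply pos_cone_add0; auto.
  - replace (vadd vzero v) with v by (vec_unfold; ring); exact Hv.
Qed.

Lemma pos_cone0_scal u c : pos_cone0 u -> 0 <= c -> pos_cone0 (vscal c u).
Proof.
  intros Hu Hc; destruct (Req_dec c 0) as [-> | Hc0].
  - right; vec_unfold; ring.
  - destruct Hu as [Hu | ->]; [left; apply pos_cone_scal; auto; lra | right; vec_unfold; ring].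
Qed.

Lemma Om_open_along u w : Om u ->
  exists s, 0 < s /\ forall s', Rabs s' <= s -> Om (vadd u (vscal s' w)).
Proof.
  intros Hu; destruct (Om_open u Hu) as [eps [He Hball]].
  destruct (coord_bound d w) as [B [HB0 HB]].
  exists (eps / (2 * (B + 1))); split; [apply Rdiv_lt_0_compat; lra |].
  intros s' Hs; apply Hball; intros i; unfold vadd, vscal.
  replace (u i + s' * w i - u i) with (s' * w i) by ring.
  rewrite Rabs_mult.
  assert (Rabs s' * Rabs (w i) <= eps / (2 * (B + 1)) * B)
    by (apply Rmult_le_compat; auto using Rabs_pos).
  assert (eps / (2 * (B + 1)) * B < eps); [| lra].
  apply Rmult_lt_reg_r with (2 * (B + 1)); [lra |].
  replace (eps / (2 * (B + 1)) * B * (2 * (B + 1))) with (eps * B) by (field; lra).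
  nra.
Qed.

Lemma pos_cone_absorbing x w : pos_cone x -> exists c, 0 < c /\ pos_cone (vsub (vscal c x) w).
Proof.
  intros [Hx px]; destruct (Om_open_along x (vscal (-1) w) Hx) as [s [Hs Hs']].
  set (t := Rmin s (phi x / (Rabs (phi w) + 1))).
  pose proof (Rabs_pos (phi w)) as Hw0; pose proof (Rle_abs (phi w)) as Hw1.
  assert (Ht : 0 < t) by (apply Rmin_glb_lt; auto; apply Rdiv_lt_0_compat; lra).
  assert (Hts : t <= s) by apply Rmin_l.
  assert (Htw : t * (Rabs (phi w) + 1) <= phi x).
  { assert (t <= phi x / (Rabs (phi w) + 1)) by apply Rmin_r.
    apply (Rmult_le_compat_r (Rabs (phi w) + 1)) in H; [| lra].
    unfold Rdiv in H; rewrite Rmult_assoc, Rinv_l, Rmult_1_r in H by lra; exact H. }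
  exists (/ t); split; [apply Rinv_0_lt_compat; auto |].
  replace (vsub (vscal (/ t) x) w) with (vscal (/ t) (vadd x (vscal t (vscal (-1) w))))
    by (vec_unfold; field; lra).
  apply pos_cone_scal; [| apply Rinv_0_lt_compat; auto].
  split; [apply Hs'; rewrite Rabs_right; lra |].
  rewrite phi_add, !phi_scal; nra.
Qed.

(** * Hilbert distance in the chart *)

Definition line_point (x y : vec d) (t : R) : vec d := vadd x (vscal t (vsub y x)).

Lemma line_point_phi x y t : phi x = 1 -> phi y = 1 -> phi (line_point x y t) = 1.
Proof.
  intros px py; unfold line_point; rewrite phi_add, phi_scal, (form_sub phi phi_linear), px, py; ring.
Qed.

(** Points of the line through x and y on either side of the segment [x, y]
    translate into cone inequalities between x and a positive multiple of y,
    and conversely. *)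
Lemma cone_of_param_neg x y lam t : phi x = 1 -> phi y = 1 -> 0 < lam -> t < 0 ->
  Om (line_point x y t) -> pos_cone (vsub (vscal (lam * (1 - t) / (- t)) x) (vscal lam y)).
Proof.
  intros px py Hl Ht HL.
  replace (vsub (vscal (lam * (1 - t) / (- t)) x) (vscal lam y))
    with (vscal (lam / (- t)) (line_point x y t)) by (unfold line_point; vec_unfold; field; lra).
  apply pos_cone_scal; [split; [exact HL | rewrite line_point_phi; lra] | apply Rdiv_lt_0_compat; lra].
Qed.

Lemma cone_of_param_gt1 x y lam t : phi x = 1 -> phi y = 1 -> 0 < lam -> 1 < t ->
  Om (line_point x y t) -> pos_cone (vsub (vscal (t / (lam * (t - 1))) (vscal lam y)) x).
Proof.
  intros px py Hl Ht HL.
  replace (vsub (vscal (t / (lam * (t - 1))) (vscal lam y)) x)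
    with (vscal (/ (t - 1)) (line_point x y t)) by (unfold line_point; vec_unfold; field; lra).
  apply pos_cone_scal; [split; [exact HL | rewrite line_point_phi; lra] | apply Rinv_0_lt_compat; lra].
Qed.

Lemma param_neg_of_cone x y lam a : phi x = 1 -> phi y = 1 -> 0 < lam ->
  pos_cone (vsub (vscal a x) (vscal lam y)) -> lam < a /\ Om (line_point x y (- lam / (a - lam))).
Proof.
  intros px py Hl [HO Hp].
  rewrite (form_sub phi phi_linear), !phi_scal, px, py in Hp.
  split; [lra |].
  replace (line_point x y (- lam / (a - lam)))
    with (vscal (/ (a - lam)) (vsub (vscal a x) (vscal lam y))) by (unfold line_point; vec_unfold; field; lra).
  apply Om_scal; [exact HO | apply Rinv_neq_0_compat; lra].
Qed.

Lemma param_gt1_of_cone x y lam b : phi x = 1 -> phi y = 1 -> 0 < lam ->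
  pos_cone (vsub (vscal b (vscal lam y)) x) -> 1 < b * lam /\ Om (line_point x y (b * lam / (b * lam - 1))).
Proof.
  intros px py Hl [HO Hp].
  rewrite (form_sub phi phi_linear), !phi_scal, px, py in Hp.
  split; [lra |].
  replace (line_point x y (b * lam / (b * lam - 1)))
    with (vscal (/ (b * lam - 1)) (vsub (vscal b (vscal lam y)) x)) by (unfold line_point; vec_unfold; field; lra).
  apply Om_scal; [exact HO | apply Rinv_neq_0_compat; lra].
Qed.

(** The Hilbert distance of a sub-cone C of the cone over Om which is closed under
    scalings and contains, together with two of its points, the points of Om on
    the line through them: the cones over Om itself and over Om ∩ P(V). *)
Section LineClosed.
Variable C : vec d -> Prop.
Hypothesis C_Om : forall u, C u -> Om u.
Hypothesis C_scal : forall u c, C u -> c <> 0 -> C (vscal c u).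
Hypothesis C_line : forall x y t, C x -> C y -> Om (line_point x y t) -> C (line_point x y t).

Lemma chart_rep_C u : C u -> C (chart_rep phi u) /\ phi (chart_rep phi u) = 1.
Proof.
  intros Hu; split; [apply C_scal; auto using Rinv_neq_0_compat | apply chart_rep_phi; auto].
Qed.

(** Boundedness of Om in the chart bounds the line parameters. *)
Lemma line_params_bounded x y : phi x = 1 -> phi y = 1 -> x <> y ->
  exists B, forall t, line_params C x y t -> - B <= t <= B.
Proof.
  intros px py Hne.
  assert (exists i, x i <> y i) as [i Hi].
  { apply not_all_ex_not; intros Hall; apply Hne, vec_ext; exact Hall. }
  destruct Om_bounded as [M HM].
  assert (Hd : 0 < Rabs (y i - x i)) by (apply Rabs_pos_lt; lra).
  exists ((M + Rabs (x i)) / Rabs (y i - x i)); intros t Ht.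
  pose proof (HM _ (C_Om _ Ht) (line_point_phi x y t px py) i) as Hbd.
  unfold line_point, vadd, vscal, vsub in Hbd.
  assert (Hprod : Rabs t * Rabs (y i - x i) <= M + Rabs (x i)).
  { rewrite <- Rabs_mult.
    replace (t * (y i - x i)) with ((x i + t * (y i - x i)) - x i) by ring.
    eapply Rle_trans; [apply Rabs_triang | rewrite Rabs_Ropp; lra]. }
  assert (Habs : Rabs t <= (M + Rabs (x i)) / Rabs (y i - x i)).
  { apply Rmult_le_reg_r with (Rabs (y i - x i)); auto.
    unfold Rdiv; rewrite Rmult_assoc, Rinv_l by lra; lra. }
  pose proof (Rle_abs t); pose proof (Rle_abs (- t)); rewrite Rabs_Ropp in *; lra.
Qed.

(** Openness of Om extends the segment [x, y] on both sides. *)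
Lemma line_params_extend x y : C x -> C y ->
  exists t1 t2, t1 < 0 /\ 1 < t2 /\ line_params C x y t1 /\ line_params C x y t2.
Proof.
  intros Cx Cy.
  destruct (Om_open_along x (vsub y x) (C_Om _ Cx)) as [s1 [Hs1 Hs1']].
  destruct (Om_open_along y (vsub y x) (C_Om _ Cy)) as [s2 [Hs2 Hs2']].
  exists (- s1), (1 + s2); repeat split; try lra; unfold line_params; apply C_line; auto;
    unfold line_point.
  - apply Hs1'; rewrite Rabs_Ropp, Rabs_right; lra.
  - replace (vadd x (vscal (1 + s2) (vsub y x))) with (vadd y (vscal s2 (vsub y x)))
      by (vec_unfold; ring).
    apply Hs2'; rewrite Rabs_right; lra.
Qed.

Lemma hilbert_dist_exists u v : C u -> C v -> exists r, hilbert_dist phi C u v r.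
Proof.
  intros Cu Cv; destruct (chart_rep_C u Cu) as [Cx px]; destruct (chart_rep_C v Cv) as [Cy py].
  unfold hilbert_dist; set (x := chart_rep phi u) in *; set (y := chart_rep phi v) in *.
  destruct (classic (x = y)) as [E | Hne]; [exists 0; left; auto |].
  destruct (line_params_bounded x y px py Hne) as [B HB].
  assert (H0 : line_params C x y 0).
  { unfold line_params; replace (vadd x (vscal 0 (vsub y x))) with x by (vec_unfold; ring); exact Cx. }
  destruct (glb_exists (line_params C x y)) as [a Ha];
    [exists 0; exact H0 | exists (- B); intros t Ht; apply HB; auto |].
  destruct (completeness (line_params C x y)) as [b Hb];
    [exists B; intros t Ht; apply HB; auto | exists 0; exact H0 |].
  eexists; right; split; [exact Hne |]; exists a, b; auto.
Qed.

Lemma hilbert_dist_le_cross_ratio u v r t1 t2 : C u -> C v -> hilbert_dist phi C u v r ->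
  t1 < 0 -> 1 < t2 ->
  line_params C (chart_rep phi u) (chart_rep phi v) t1 ->
  line_params C (chart_rep phi u) (chart_rep phi v) t2 ->
  r <= / 2 * ln (cross_ratio t1 t2).
Proof.
  intros Cu Cv Hd Ht1 Ht2 P1 P2.
  pose proof (cross_ratio_gt1 t1 t2 Ht1 Ht2) as Hgt1.
  assert (0 < ln (cross_ratio t1 t2)) by (rewrite <- ln_1; apply ln_increasing; lra).
  destruct Hd as [[_ ->] | [_ [a [b [Ha [Hb ->]]]]]]; [lra |].
  assert (a <= t1) by (apply Ha; auto).
  assert (t2 <= b) by (apply Hb; auto).
  rewrite cross_ratio_formula by lra.
  apply Rmult_le_compat_l; [lra |].
  apply ln_le; [pose proof (cross_ratio_gt1 a b); lra | apply cross_ratio_antitone; lra].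
Qed.

Lemma hilbert_dist_nonneg u v r : C u -> C v -> hilbert_dist phi C u v r -> 0 <= r.
Proof.
  intros Cu Cv Hd.
  destruct (chart_rep_C u Cu) as [Cx _]; destruct (chart_rep_C v Cv) as [Cy _].
  destruct (line_params_extend _ _ Cx Cy) as [t1 [t2 [Ht1 [Ht2 [P1 P2]]]]].
  destruct Hd as [[_ ->] | [_ [a [b [Ha [Hb ->]]]]]]; [lra |].
  assert (a <= t1) by (apply Ha; auto).
  assert (t2 <= b) by (apply Hb; auto).
  rewrite cross_ratio_formula by lra.
  pose proof (cross_ratio_gt1 a b ltac:(lra) ltac:(lra)).
  assert (0 < ln (cross_ratio a b)) by (rewrite <- ln_1; apply ln_increasing; lra).
  lra.
Qed.

Lemma hilbert_dist_approx u v r mu : C u -> C v -> hilbert_dist phi C u v r ->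
  chart_rep phi u <> chart_rep phi v -> 0 < mu < 1 ->
  exists s1 s2, s1 < 0 /\ 1 < s2 /\
    line_params C (chart_rep phi u) (chart_rep phi v) s1 /\
    line_params C (chart_rep phi u) (chart_rep phi v) s2 /\
    cross_ratio s1 s2 <= exp (2 * r) / (mu * mu).
Proof.
  intros Cu Cv Hd Hne Hmu.
  destruct (chart_rep_C u Cu) as [Cx _]; destruct (chart_rep_C v Cv) as [Cy _].
  set (x := chart_rep phi u) in *; set (y := chart_rep phi v) in *.
  destruct Hd as [[E _] | [_ [a [b [Ha [Hb ->]]]]]]; [contradiction |].
  destruct (line_params_extend _ _ Cx Cy) as [t1 [t2 [Ht1 [Ht2 [P1 P2]]]]].
  assert (a <= t1) by (apply Ha; auto).
  assert (t2 <= b) by (apply Hb; auto).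
  assert (Hs1 : exists s1, line_params C x y s1 /\ a <= s1 < a * mu).
  { apply not_all_not_ex; intros Hn.
    assert (a * mu <= a); [| nra].
    apply Ha; intros t Ht; apply Rnot_lt_le; intros Hlt.
    apply (Hn t); split; [| split; [apply Ha |]]; auto. }
  assert (Hs2 : exists s2, line_params C x y s2 /\ 1 + (b - 1) * mu < s2 <= b).
  { apply not_all_not_ex; intros Hn.
    assert (b <= 1 + (b - 1) * mu); [| nra].
    apply Hb; intros t Ht; apply Rnot_lt_le; intros Hlt.
    apply (Hn t); split; [| split; [| apply Hb]]; auto. }
  destruct Hs1 as [s1 [Q1 Hs1]]; destruct Hs2 as [s2 [Q2 Hs2]].
  exists s1, s2; repeat split; auto; try nra.
  rewrite cross_ratio_formula by lra.
  replace (2 * (/ 2 * ln (cross_ratio a b))) with (ln (cross_ratio a b)) by field.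
  rewrite exp_ln by (pose proof (cross_ratio_gt1 a b); lra).
  apply cross_ratio_approx; lra.
Qed.

Lemma dist_le_of_cone_bounds u v r lam rho rho' : C u -> C v -> hilbert_dist phi C u v r -> 0 < lam ->
  pos_cone (vsub (vscal rho (chart_rep phi u)) (vscal lam (chart_rep phi v))) ->
  pos_cone (vsub (vscal rho' (vscal lam (chart_rep phi v))) (chart_rep phi u)) ->
  r <= / 2 * ln (rho * rho').
Proof.
  intros Cu Cv Hd Hl K1 K2.
  destruct (chart_rep_C u Cu) as [Cx px]; destruct (chart_rep_C v Cv) as [Cy py].
  destruct (param_neg_of_cone _ _ _ _ px py Hl K1) as [R1 L1].
  destruct (param_gt1_of_cone _ _ _ _ px py Hl K2) as [R2 L2].
  assert (Ht1 : - lam / (rho - lam) < 0).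
  { unfold Rdiv; rewrite Ropp_mult_distr_l_reverse.
    apply Ropp_lt_gt_0_contravar, Rdiv_lt_0_compat; lra. }
  assert (Ht2 : 1 < rho' * lam / (rho' * lam - 1)).
  { apply Rmult_lt_reg_r with (rho' * lam - 1); [lra |].
    unfold Rdiv; rewrite Rmult_assoc, Rinv_l by lra; lra. }
  replace (rho * rho') with (cross_ratio (- lam / (rho - lam)) (rho' * lam / (rho' * lam - 1)))
    by (unfold cross_ratio; field; repeat split; lra).
  apply (hilbert_dist_le_cross_ratio u v); auto; unfold line_params; apply C_line; auto.
Qed.

Lemma cone_bounds_of_dist u v r lam mu : C u -> C v -> hilbert_dist phi C u v r ->
  0 < lam -> 0 < mu < 1 ->
  exists a b, 0 < a /\ 0 < b /\
    pos_cone (vsub (vscal a (chart_rep phi u)) (vscal lam (chart_rep phi v))) /\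
    pos_cone (vsub (vscal b (vscal lam (chart_rep phi v))) (chart_rep phi u)) /\
    a * b <= exp (2 * r) / (mu * mu).
Proof.
  intros Cu Cv Hd Hl Hmu.
  destruct (chart_rep_C u Cu) as [Cx px]; destruct (chart_rep_C v Cv) as [Cy py].
  set (x := chart_rep phi u) in *; set (y := chart_rep phi v) in *.
  destruct (classic (x = y)) as [E | Hne].
  - assert (r = 0) as -> by (destruct Hd as [[_ ?] | [Hne _]]; [auto | contradiction]).
    assert (Kx : pos_cone x) by (split; [apply C_Om | lra]; auto).
    assert (Hmu1 : 1 < / mu) by (rewrite <- Rinv_1; apply Rinv_lt_contravar; lra).
    exists (lam / mu), (/ (mu * lam)); rewrite <- E.
    refine (conj _ (conj _ (conj _ (conj _ _)))).
    + apply Rdiv_lt_0_compat; lra.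
    + apply Rinv_0_lt_compat, Rmult_lt_0_compat; lra.
    + replace (vsub (vscal (lam / mu) x) (vscal lam x)) with (vscal (lam * (/ mu - 1)) x)
        by (vec_unfold; field; lra).
      apply pos_cone_scal; [exact Kx | apply Rmult_lt_0_compat; lra].
    + replace (vsub (vscal (/ (mu * lam)) (vscal lam x)) x) with (vscal (/ mu - 1) x)
        by (vec_unfold; field; lra).
      apply pos_cone_scal; [exact Kx | lra].
    + rewrite Rmult_0_r, exp_0; right; field; lra.
  - destruct (hilbert_dist_approx u v r mu Cu Cv Hd Hne Hmu)
      as [s1 [s2 [Hs1 [Hs2 [P1 [P2 Hcr]]]]]].
    exists (lam * (1 - s1) / (- s1)), (s2 / (lam * (s2 - 1))).
    refine (conj _ (conj _ (conj _ (conj _ _)))).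
    + apply Rdiv_lt_0_compat; [apply Rmult_lt_0_compat |]; lra.
    + apply Rdiv_lt_0_compat; [| apply Rmult_lt_0_compat]; lra.
    + apply cone_of_param_neg; auto.
    + apply cone_of_param_gt1; auto.
    + replace (lam * (1 - s1) / - s1 * (s2 / (lam * (s2 - 1)))) with (cross_ratio s1 s2)
        by (unfold cross_ratio; field; repeat split; lra).
      exact Hcr.
Qed.

End LineClosed.

(** * Balanced points of a cone automorphism *)

Lemma iter_cone f n u : (forall u, pos_cone u -> pos_cone (f u)) -> pos_cone u ->
  pos_cone (Nat.iter n f u).
Proof. intros Hcone Hu; induction n; simpl; auto. Qed.

Lemma iterate_growth f x a n : is_linear f -> (forall u, pos_cone u -> pos_cone (f u)) -> 0 < a ->
  pos_cone (vsub (vscal a x) (f x)) -> pos_cone0 (vsub (vscal (a ^ n) x) (Nat.iter n f x)).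
Proof.
  intros Hf Hcone Ha Hx; induction n as [|n IH].
  - right; simpl; vec_unfold; ring.
  - pose proof (iter_linear f n Hf) as [Hadd Hscal].
    replace (vsub (vscal (a ^ S n) x) (Nat.iter (S n) f x))
      with (vadd (vscal a (vsub (vscal (a ^ n) x) (Nat.iter n f x))) (Nat.iter n f (vsub (vscal a x) (f x)))).
    + apply pos_cone0_add; [apply pos_cone0_scal; [exact IH | lra] |].
      left; apply iter_cone; auto.
    + rewrite (lin_sub _ (iter_linear f n Hf)), Hscal, Nat.iter_swap; simpl; vec_unfold; ring.
Qed.

Lemma iterate_growth_at f x w a c c' n : is_linear f -> (forall u, pos_cone u -> pos_cone (f u)) ->
  0 < a -> 0 < c -> pos_cone (vsub (vscal a x) (f x)) ->
  pos_cone (vsub (vscal c x) w) -> pos_cone (vsub (vscal c' w) x) ->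
  pos_cone0 (vsub (vscal (c * c' * a ^ n) w) (Nat.iter n f w)).
Proof.
  intros Hf Hcone Ha Hc Hx Hxw Hwx.
  pose proof (iter_linear f n Hf) as [Hadd Hscal].
  replace (vsub (vscal (c * c' * a ^ n) w) (Nat.iter n f w)) with
    (vadd (vscal (c * a ^ n) (vsub (vscal c' w) x))
      (vadd (vscal c (vsub (vscal (a ^ n) x) (Nat.iter n f x))) (Nat.iter n f (vsub (vscal c x) w)))).
  - left; apply pos_cone_add0.
    + apply pos_cone_scal; [exact Hwx | apply Rmult_lt_0_compat; [| apply pow_lt]; auto].
    + apply pos_cone0_add; [apply pos_cone0_scal; [apply iterate_growth |]; auto; lra |].
      left; apply iter_cone; auto.
  - rewrite (lin_sub _ (iter_linear f n Hf)), Hscal; vec_unfold; ring.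
Qed.

Fixpoint orbit_sum (f : vec d -> vec d) (rho : R) (w : vec d) (N : nat) : vec d :=
  match N with
  | O => vzero
  | S n => vadd (orbit_sum f rho w n) (vscal (/ rho ^ S n) (Nat.iter (S n) f w))
  end.

(** The point  w + sum_{n=1}^N rho^{-n} f^n w + sum_{n=1}^N rho'^{-n} f'^n w;
    for f' the inverse of f and N large it is moved by f by a factor about rho,
    and by f' by a factor about rho'. *)
Definition balanced_point (f f' : vec d -> vec d) (rho rho' : R) (w : vec d) (N : nat) : vec d :=
  vadd w (vadd (orbit_sum f rho w N) (orbit_sum f' rho' w N)).

Lemma orbit_sum_cone f rho w N : 0 < rho -> (forall u, pos_cone u -> pos_cone (f u)) ->
  pos_cone w -> pos_cone0 (orbit_sum f rho w N).
Proof.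
  intros Hr Hcone Hw; induction N as [|N IH]; simpl; [right; reflexivity |].
  apply pos_cone0_add; [exact IH |].
  apply pos_cone0_scal; [left; apply (iter_cone f (S N)); auto |].
  left; apply Rinv_0_lt_compat, (pow_lt rho (S N)); exact Hr.
Qed.

Section Balanced.
Variables f finv : vec d -> vec d.
Hypothesis f_linear : is_linear f.
Hypothesis f_finv : forall u, f (finv u) = u.
Hypothesis f_cone : forall u, pos_cone u -> pos_cone (f u).
Hypothesis finv_cone : forall u, pos_cone u -> pos_cone (finv u).
Variable w : vec d.
Hypothesis w_cone : pos_cone w.

Lemma orbit_sum_shift rho N : rho <> 0 ->
  f (orbit_sum f rho w N) =
  vadd (vsub (vscal rho (orbit_sum f rho w N)) (f w)) (vscal (/ rho ^ N) (Nat.iter (S N) f w)).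
Proof.
  intros Hr; destruct f_linear as [Hadd Hscal]; induction N as [|N IH].
  - simpl; rewrite (lin_zero _ f_linear); vec_unfold; field.
  - simpl orbit_sum; rewrite Hadd, Hscal, IH.
    change (f (Nat.iter (S N) f w)) with (Nat.iter (S (S N)) f w).
    vec_unfold; simpl; field; split; [apply pow_nonzero |]; auto.
Qed.

Lemma orbit_sum_shift_inv rho' N : rho' <> 0 ->
  f (orbit_sum finv rho' w N) =
  vsub (vadd (vscal (/ rho') (orbit_sum finv rho' w N)) (vscal (/ rho') w))
    (vscal (/ rho' ^ S N) (Nat.iter N finv w)).
Proof.
  intros Hr; destruct f_linear as [Hadd Hscal]; induction N as [|N IH].
  - simpl; rewrite (lin_zero _ f_linear); vec_unfold; field; auto.
  - simpl orbit_sum; rewrite Hadd, Hscal, IH.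
    change (Nat.iter (S N) finv w) with (finv (Nat.iter N finv w)); rewrite f_finv.
    vec_unfold; simpl; field; split; [apply pow_nonzero |]; auto.
Qed.

Lemma balanced_point_dominates rho rho' B N : 0 < rho -> 0 < rho' -> 0 <= B ->
  pos_cone0 (vsub (vscal B w) (Nat.iter (S N) f w)) -> B / rho ^ N < rho - / rho' ->
  pos_cone (vsub (vscal rho (balanced_point f finv rho rho' w N))
                 (f (balanced_point f finv rho rho' w N))).
Proof.
  intros Hr Hr' HB Hgrowth Hsmall.
  assert (HrN : 0 < rho ^ N) by (apply pow_lt; exact Hr).
  assert (Hmargin : 0 <= rho - / rho') by (assert (0 <= B / rho ^ N) by (apply Rle_mult_inv_pos; lra); lra).
  destruct f_linear as [Hadd Hscal].
  replace (vsub (vscal rho (balanced_point f finv rho rho' w N)) (f (balanced_point f finv rho rho' w N)))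
    with (vadd (vscal (rho - / rho' - B / rho ^ N) w)
           (vadd (vscal (/ rho ^ N) (vsub (vscal B w) (Nat.iter (S N) f w)))
             (vadd (vscal (rho - / rho') (orbit_sum finv rho' w N))
                   (vscal (/ rho' ^ S N) (Nat.iter N finv w))))).
  - apply pos_cone_add0; [apply pos_cone_scal; [exact w_cone | lra] |].
    apply pos_cone0_add; [apply pos_cone0_scal; [exact Hgrowth | left; apply Rinv_0_lt_compat; exact HrN] |].
    apply pos_cone0_add; [apply pos_cone0_scal; [apply orbit_sum_cone; auto | exact Hmargin] |].
    apply pos_cone0_scal; [left; apply iter_cone; auto |].
    left; apply Rinv_0_lt_compat, (pow_lt rho' (S N)); exact Hr'.
  - unfold balanced_point; rewrite !Hadd, orbit_sum_shift, orbit_sum_shift_inv by lra.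
    vec_unfold; field; repeat split; try apply pow_nonzero; lra.
Qed.

End Balanced.

Lemma orbit_sum_subspace (V : vec d -> Prop) f rho w N : is_subspace V ->
  (forall u, V u -> V (f u)) -> V w -> V (orbit_sum f rho w N).
Proof.
  intros [V0 [Vadd Vscal]] Hf Hw.
  assert (Hiter : forall n, V (Nat.iter n f w)) by (induction n; simpl; auto).
  induction N as [|N IH]; simpl; auto.
Qed.

Lemma balanced_point_subspace (V : vec d -> Prop) f f' rho rho' w N : is_subspace V ->
  (forall u, V u -> V (f u)) -> (forall u, V u -> V (f' u)) -> V w ->
  V (balanced_point f f' rho rho' w N).
Proof.
  intros HV Hf Hf' Hw; pose proof HV as [_ [Vadd _]].
  unfold balanced_point; apply Vadd; [| apply Vadd; apply orbit_sum_subspace]; auto.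
Qed.

Section ConeAutomorphism.
Variables h k : vec d -> vec d.
Hypothesis h_linear : is_linear h.
Hypothesis k_linear : is_linear k.
Hypothesis hk : forall u, h (k u) = u.
Hypothesis kh : forall u, k (h u) = u.
Hypothesis h_cone : forall u, pos_cone u -> pos_cone (h u).
Hypothesis k_cone : forall u, pos_cone u -> pos_cone (k u).

Lemma balanced_point_exists x w a b q : pos_cone x -> pos_cone w -> 0 < a -> 0 < b -> 1 < q ->
  pos_cone (vsub (vscal a x) (h x)) -> pos_cone (vsub (vscal b x) (k x)) ->
  exists N,
    pos_cone (vsub (vscal (a * q) (balanced_point h k (a * q) (b * q) w N))
                   (h (balanced_point h k (a * q) (b * q) w N))) /\
    pos_cone (vsub (vscal (b * q) (balanced_point h k (a * q) (b * q) w N))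
                   (k (balanced_point h k (a * q) (b * q) w N))).
Proof.
  intros Kx Kw Ha Hb Hq Kax Kbx.
  assert (Hab : 1 < a * b).
  { assert (Kab : pos_cone (vadd (vscal b (vsub (vscal a x) (h x))) (h (vsub (vscal b x) (k x))))).
    { apply pos_cone_add; [apply pos_cone_scal |]; auto. }
    destruct Kx as [_ px]; destruct Kab as [_ Hp].
    rewrite (lin_sub _ h_linear), (proj2 h_linear), hk, phi_add, phi_scal,
      !(form_sub phi phi_linear), !phi_scal in Hp.
    nra. }
  destruct (pos_cone_absorbing x w Kx) as [c [Hc Kxw]].
  destruct (pos_cone_absorbing w x Kw) as [c' [Hc' Kwx]].
  set (rho := a * q); set (rho' := b * q).
  assert (Hr : 0 < rho) by (unfold rho; nra).
  assert (Hr' : 0 < rho') by (unfold rho'; nra).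
  assert (D1 : 0 < rho - / rho').
  { replace (rho - / rho') with ((rho * rho' - 1) / rho') by (field; lra).
    apply Rdiv_lt_0_compat; unfold rho, rho'; nra. }
  assert (D2 : 0 < rho' - / rho).
  { replace (rho' - / rho) with ((rho * rho' - 1) / rho) by (field; lra).
    apply Rdiv_lt_0_compat; unfold rho, rho'; nra. }
  set (K := c * c').
  assert (HK : 0 < K) by (unfold K; nra).
  assert (T1 : 0 <= K * a / (rho - / rho')) by (apply Rlt_le, Rdiv_lt_0_compat; nra).
  assert (T2 : 0 <= K * b / (rho' - / rho)) by (apply Rlt_le, Rdiv_lt_0_compat; nra).
  destruct (Pow_x_infinity q ltac:(rewrite Rabs_right; lra)
              (K * a / (rho - / rho') + K * b / (rho' - / rho) + 1)) as [N HN].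
  specialize (HN N (le_n N)); rewrite Rabs_right in HN by (left; apply pow_lt; lra).
  exists N; split.
  - apply (balanced_point_dominates h k) with (B := K * a ^ S N); auto.
    + apply Rlt_le, Rmult_lt_0_compat; [| apply pow_lt]; auto.
    + apply (iterate_growth_at h x w a c c'); auto.
    + apply scaled_power_small; lra.
  - replace (balanced_point h k rho rho' w N) with (balanced_point k h rho' rho w N)
      by (unfold balanced_point; vec_unfold; ring).
    apply (balanced_point_dominates k h) with (B := K * b ^ S N); auto.
    + apply Rlt_le, Rmult_lt_0_compat; [| apply pow_lt]; auto.
    + apply (iterate_growth_at k x w b c c'); auto.
    + apply scaled_power_small; lra.
Qed.

Lemma h_Om u : Om u -> Om (h u).
Proof.
  intros Hu; destruct (Rtotal_order (phi u) 0) as [Hn | [H0 | Hp]].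
  - assert (Kneg : pos_cone (h (vscal (-1) u))).
    { apply h_cone; split; [apply Om_scal; [exact Hu | lra] | rewrite phi_scal; lra]. }
    rewrite (proj2 h_linear) in Kneg; destruct Kneg as [HO _].
    replace (h u) with (vscal (-1) (vscal (-1) (h u))) by (vec_unfold; ring).
    apply Om_scal; [exact HO | lra].
  - exfalso; exact (phi_nonzero u Hu H0).
  - apply h_cone; split; auto.
Qed.

Lemma chart_rep_image u : Om u ->
  0 < phi (h (chart_rep phi u)) /\
  h (chart_rep phi u) = vscal (phi (h (chart_rep phi u))) (chart_rep phi (h u)).
Proof.
  intros Hu; split; [apply h_cone, chart_rep_pos_cone; exact Hu |].
  assert (phi u <> 0) by (apply phi_nonzero; exact Hu).
  assert (phi (h u) <> 0) by (apply phi_nonzero, h_Om; exact Hu).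
  unfold chart_rep; rewrite (proj2 h_linear), !phi_scal; vec_unfold; field; auto.
Qed.

Lemma dominance_of_displacement u r mu : Om u -> hilbert_dist phi Om u (h u) r -> 0 < mu < 1 ->
  exists a b, 0 < a /\ 0 < b /\
    pos_cone (vsub (vscal a (chart_rep phi u)) (h (chart_rep phi u))) /\
    pos_cone (vsub (vscal b (chart_rep phi u)) (k (chart_rep phi u))) /\
    a * b <= exp (2 * r) / (mu * mu).
Proof.
  intros Hu Hd Hmu.
  destruct (chart_rep_image u Hu) as [Hlam Ehx].
  destruct (cone_bounds_of_dist Om (fun _ H => H) Om_scal (fun _ _ _ _ _ H => H)
              u (h u) r _ _ Hu (h_Om u Hu) Hd Hlam Hmu)
    as [a [b [Ha [Hb [Kax [Kbx Hab]]]]]].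
  rewrite <- Ehx in Kax, Kbx.
  exists a, b; repeat (split; [assumption |]); split; [| exact Hab].
  replace (vsub (vscal b (chart_rep phi u)) (k (chart_rep phi u)))
    with (k (vsub (vscal b (h (chart_rep phi u))) (chart_rep phi u)))
    by (rewrite (lin_sub _ k_linear), (proj2 k_linear), kh; reflexivity).
  apply k_cone; exact Kbx.
Qed.

Section Subspace.
Variable V : vec d -> Prop.
Hypothesis V_subspace : is_subspace V.
Hypothesis h_V : forall u, V u -> V (h u).
Hypothesis k_V : forall u, V u -> V (k u).

Lemma proj_inter_Om u : proj_inter Om V u -> Om u.
Proof. intros [Hu _]; exact Hu. Qed.

Lemma proj_inter_scal u c : proj_inter Om V u -> c <> 0 -> proj_inter Om V (vscal c u).
Proof.
  intros [Hu Vu] Hc; destruct V_subspace as [_ [_ Vscal]]; split; [apply Om_scal |]; auto.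
Qed.

Lemma proj_inter_line x y t : proj_inter Om V x -> proj_inter Om V y ->
  Om (line_point x y t) -> proj_inter Om V (line_point x y t).
Proof.
  intros [_ Vx] [_ Vy] HO; destruct V_subspace as [_ [Vadd Vscal]]; split; [exact HO |].
  unfold line_point; apply Vadd; [exact Vx | apply Vscal].
  replace (vsub y x) with (vadd y (vscal (-1) x)) by (vec_unfold; ring).
  apply Vadd; [exact Vy | apply Vscal; exact Vx].
Qed.

Lemma proj_inter_h u : proj_inter Om V u -> proj_inter Om V (h u).
Proof. intros [Hu Vu]; split; [apply h_Om | apply h_V]; auto. Qed.

(** Lines through two points of Om ∩ P(V) meet Om inside P(V), so the Hilbert
    distance of Om ∩ P(V) is the restriction of that of Om. *)
Lemma hilbert_dist_restrict u v r : proj_inter Om V u -> proj_inter Om V v ->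
  hilbert_dist phi (proj_inter Om V) u v r -> hilbert_dist phi Om u v r.
Proof.
  intros Cu Cv Hd.
  destruct (chart_rep_C (proj_inter Om V) proj_inter_Om proj_inter_scal u Cu) as [Cx _].
  destruct (chart_rep_C (proj_inter Om V) proj_inter_Om proj_inter_scal v Cv) as [Cy _].
  unfold hilbert_dist in *.
  replace (line_params Om (chart_rep phi u) (chart_rep phi v))
    with (line_params (proj_inter Om V) (chart_rep phi u) (chart_rep phi v)); [exact Hd |].
  apply functional_extensionality; intros t; apply propositional_extensionality.
  split; [intros [HO _]; exact HO | intros HO; apply proj_inter_line; auto].
Qed.

Lemma displacement_le_of_dominance y r rho rho' : proj_inter Om V y -> pos_cone y ->
  pos_cone (vsub (vscal rho y) (h y)) -> pos_cone (vsub (vscal rho' y) (k y)) ->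
  hilbert_dist phi (proj_inter Om V) y (h y) r -> r <= / 2 * ln (rho * rho').
Proof.
  intros Cy [_ Hpy] Kh Kk Hd.
  assert (Hinv : 0 < / phi y) by (apply Rinv_0_lt_compat; exact Hpy).
  destruct (chart_rep_image y (proj_inter_Om y Cy)) as [Hlam Ehy].
  apply (dist_le_of_cone_bounds (proj_inter Om V) proj_inter_Om proj_inter_scal proj_inter_line
           y (h y) r (phi (h (chart_rep phi y)))); auto using proj_inter_h; rewrite <- Ehy;
    unfold chart_rep; rewrite (proj2 h_linear).
  - replace (vsub (vscal rho (vscal (/ phi y) y)) (vscal (/ phi y) (h y)))
      with (vscal (/ phi y) (vsub (vscal rho y) (h y))) by (vec_unfold; ring).
    apply pos_cone_scal; auto.
  - replace (vsub (vscal rho' (vscal (/ phi y) (h y))) (vscal (/ phi y) y))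
      with (vscal (/ phi y) (h (vsub (vscal rho' y) (k y))))
      by (rewrite (lin_sub _ h_linear), (proj2 h_linear), hk; vec_unfold; ring).
    apply pos_cone_scal; auto.
Qed.

(** The heart of the proof: a point u of Om moved by distance r is matched, up to
    any eps > 0, by a point of Om ∩ P(V) moved by at most r + eps, namely a
    balanced point built from a point u0 of Om ∩ P(V). *)
Lemma displacement_restrict_close u0 u r eps : proj_inter Om V u0 -> Om u ->
  hilbert_dist phi Om u (h u) r -> 0 < eps ->
  exists y r', proj_inter Om V y /\ hilbert_dist phi (proj_inter Om V) y (h y) r' /\ r' <= r + eps.
Proof.
  intros Cu0 Hu Hd He.
  set (q := exp (eps / 2)).
  assert (Hq : 1 < q) by (unfold q; pose proof (exp_ineq1 (eps / 2)); lra).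
  assert (Hmu : 0 < / q < 1).
  { split; [apply Rinv_0_lt_compat; lra | rewrite <- Rinv_1; apply Rinv_lt_contravar; lra]. }
  destruct (dominance_of_displacement u r (/ q) Hu Hd Hmu) as [a [b [Ha [Hb [Kax [Kbx Hab]]]]]].
  destruct (chart_rep_C (proj_inter Om V) proj_inter_Om proj_inter_scal u0 Cu0) as [[_ Vw] _].
  set (w := chart_rep phi u0) in *.
  assert (Kw : pos_cone w) by (apply chart_rep_pos_cone, proj_inter_Om; exact Cu0).
  destruct (balanced_point_exists (chart_rep phi u) w a b q) as [N [Ky1 Ky2]]; auto.
  { apply chart_rep_pos_cone; exact Hu. }
  set (y := balanced_point h k (a * q) (b * q) w N) in *.
  assert (Ky : pos_cone y).
  { apply pos_cone_add0; [exact Kw |].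
    apply pos_cone0_add; apply orbit_sum_cone; auto; nra. }
  assert (Cy : proj_inter Om V y).
  { split; [apply Ky |].
    apply balanced_point_subspace; auto. }
  destruct (hilbert_dist_exists (proj_inter Om V) proj_inter_Om proj_inter_scal
              y (h y) Cy (proj_inter_h y Cy)) as [r' Hd'].
  exists y, r'; split; [exact Cy |]; split; [exact Hd' |].
  pose proof (displacement_le_of_dominance y r' _ _ Cy Ky Ky1 Ky2 Hd') as Hdist.
  (* a q b q <= exp (2 r) q^4 = exp (2 r + 2 eps) *)
  assert (Hrho : a * q * (b * q) <= exp (2 * r + 2 * eps)).
  { replace (2 * r + 2 * eps) with (2 * r + eps / 2 + eps / 2 + eps / 2 + eps / 2) by field.
    rewrite !exp_plus; fold q.
    replace (a * q * (b * q)) with (a * b * (q * q)) by ring.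
    replace (exp (2 * r) / (/ q * / q)) with (exp (2 * r) * (q * q)) in Hab by (field; lra).
    replace (exp (2 * r) * q * q * q * q) with (exp (2 * r) * (q * q) * (q * q)) by ring.
    apply Rmult_le_compat_r; [nra | exact Hab]. }
  apply ln_le in Hrho; [rewrite ln_exp in Hrho; lra |].
  apply Rmult_lt_0_compat; apply Rmult_lt_0_compat; lra.
Qed.

Lemma translation_length_restrict : (exists u0, proj_inter Om V u0) ->
  exists m, is_translation_length phi (proj_inter Om V) h m /\ is_translation_length phi Om h m.
Proof.
  intros [u0 Cu0].
  destruct (glb_exists (displacements phi (proj_inter Om V) h)) as [m [Hlow Hglb]].
  - destruct (hilbert_dist_exists (proj_inter Om V) proj_inter_Om proj_inter_scal
                u0 (h u0) Cu0 (proj_inter_h u0 Cu0)) as [r Hr].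
    exists r, u0; auto.
  - exists 0; intros r [u [Cu Hd]].
    apply (hilbert_dist_nonneg (proj_inter Om V) proj_inter_Om proj_inter_scal proj_inter_line
             u (h u) r Cu (proj_inter_h u Cu) Hd).
  - exists m; split; [split; auto | split].
    + intros r [u [Hu Hd]]; apply Rnot_lt_le; intros Hlt.
      destruct (displacement_restrict_close u0 u r ((m - r) / 2) Cu0 Hu Hd ltac:(lra))
        as [y [r' [Cy [Hd' Hle]]]].
      assert (m <= r') by (apply Hlow; exists y; auto).
      lra.
    + intros b Hb; apply Hglb; intros r [u [Cu Hd]]; apply Hb.
      exists u; split; [apply proj_inter_Om; exact Cu |].
      apply hilbert_dist_restrict; auto using proj_inter_h.
Qed.

End Subspace.
End ConeAutomorphism.

(** * From projective automorphisms to cone automorphisms *)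

(** A linear map preserving Om maps the positive cone either to itself or to its
    opposite: phi o g cannot change sign on the convex cone without vanishing. *)
Lemma automorphism_sign g u0 : is_linear g -> (forall u, Om u <-> Om (g u)) -> Om u0 ->
  exists s, s * s = 1 /\ forall u, pos_cone u -> pos_cone (vscal s (g u)).
Proof.
  intros [gadd gscal] Hg Hu0.
  set (w := chart_rep phi u0); assert (Kw : pos_cone w) by (apply chart_rep_pos_cone; exact Hu0).
  set (p := phi (g w)); assert (Hp : p <> 0) by (apply phi_nonzero, (proj1 (Hg w)), Kw).
  set (s := if Rlt_dec 0 p then 1 else -1).
  assert (Hs : s * s = 1) by (unfold s; destruct (Rlt_dec 0 p); ring).
  assert (Hsp : 0 < s * p) by (unfold s; destruct (Rlt_dec 0 p); lra).
  exists s; split; [exact Hs |]; intros u Ku.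
  assert (Hgu : Om (g u)) by (apply (proj1 (Hg u)), Ku).
  split; [apply Om_scal; [exact Hgu | intros ->; lra] |].
  rewrite phi_scal; set (su := s * phi (g u)).
  destruct (Rtotal_order 0 su) as [Hpos | [Hzero | Hneg]]; [exact Hpos | exfalso ..].
  - apply (phi_nonzero (g u) Hgu); unfold su in Hzero; nra.
  - (* a positive combination z of w and u with phi (g z) = 0 *)
    set (z := vadd (vscal (- su) w) (vscal (s * p) u)).
    assert (Kz : pos_cone z) by (apply pos_cone_add; apply pos_cone_scal; auto; lra).
    apply (phi_nonzero (g z)); [apply (proj1 (Hg z)), Kz |].
    unfold z; rewrite gadd, !gscal, phi_add, !phi_scal; fold p; unfold su; ring.
Qed.

Lemma inverse_cone h k : is_linear h -> (forall u, h (k u) = u) ->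
  (forall u, Om (h u) -> Om u) -> (forall u, pos_cone u -> pos_cone (h u)) ->
  forall u, pos_cone u -> pos_cone (k u).
Proof.
  intros [_ hscal] hk Hh Hcone u [Hu pu].
  assert (Hku : Om (k u)) by (apply Hh; rewrite hk; exact Hu).
  split; [exact Hku |].
  destruct (Rtotal_order 0 (phi (k u))) as [Hpos | [Hzero | Hneg]]; [exact Hpos | exfalso ..].
  - exact (phi_nonzero _ Hku (eq_sym Hzero)).
  - assert (Kneg : pos_cone (h (vscal (-1) (k u)))).
    { apply Hcone; split; [apply Om_scal; [exact Hku | lra] | rewrite phi_scal; lra]. }
    destruct Kneg as [_ Hp]; rewrite hscal, hk, phi_scal in Hp; lra.
Qed.

(** Hilbert distances only see the projective classes of the points, so the sign
    change does not alter displacements. *)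
Lemma displacements_scaled (C : vec d -> Prop) g s : (forall u, C u -> Om u) ->
  (forall u, C u -> Om (g u)) -> s <> 0 ->
  displacements phi C (fun u => vscal s (g u)) = displacements phi C g.
Proof.
  intros C_Om Cg Hs; apply functional_extensionality; intros r; apply propositional_extensionality.
  unfold displacements, hilbert_dist; split; intros [u [Cu Hd]]; exists u; split; auto;
    [rewrite chart_rep_scal in Hd | rewrite chart_rep_scal]; auto; apply phi_nonzero; auto.
Qed.

End ProperlyConvex.

Theorem mainTheorem11 (d : nat) (phi : vec d -> R) (Om : vec d -> Prop)
  (g : vec d -> vec d) (V : vec d -> Prop) :
  properly_convex_in_chart phi Om ->
  is_aut Om g ->
  is_subspace V ->
  dim_gt_1 V ->
  (exists u, proj_inter Om V u) ->
  (forall u, V u <-> V (g u)) ->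
  exists m,
    is_translation_length phi (proj_inter Om V) g m /\
    is_translation_length phi Om g m.
Proof.
  intros [Hphi [Hproj [_ [Hphi0 [Hopen [Hconv Hbdd]]]]]] [[Hg [ginv [Hginv_g Hg_ginv]]] HgOm]
    HV _ [u0 Hu0] HgV.
  (* replace g by h = s g, which preserves the positive cone, with inverse k = s g^-1 *)
  destruct (automorphism_sign phi Om Hphi Hproj Hphi0 Hconv g u0 Hg HgOm (proj1 Hu0))
    as [s [Hs h_cone]].
  assert (Hs0 : s <> 0) by (intros ->; lra).
  assert (Hginv : is_linear ginv) by (apply (inverse_linear g); auto).
  assert (hk : forall u, vscal s (g (vscal s (ginv u))) = u) by (apply scaled_inverse; auto).
  assert (kh : forall u, vscal s (ginv (vscal s (g u))) = u) by (apply scaled_inverse; auto).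
  assert (h_Om : forall u, Om (vscal s (g u)) -> Om u)
    by (intros u Hu; apply (proj2 (HgOm u)), (proj2 (proj2 Hproj (g u) s Hs0)), Hu).
  pose proof (inverse_cone phi Om Hphi Hproj Hphi0 _ _ (scaled_linear g s Hg) hk h_Om h_cone)
    as k_cone.
  destruct HV as [V0 [Vadd Vscal]].
  assert (h_V : forall u, V u -> V (vscal s (g u))) by (intros u Hu; apply Vscal, (proj1 (HgV u)), Hu).
  assert (k_V : forall u, V u -> V (vscal s (ginv u)))
    by (intros u Hu; apply Vscal, (proj2 (HgV (ginv u))); rewrite Hg_ginv; exact Hu).
  (* the sign change leaves all displacements, hence translation lengths, unchanged *)
  destruct (translation_length_restrict phi Om Hphi Hproj Hphi0 Hopen Hconv Hbdd
              _ _ (scaled_linear g s Hg) (scaled_linear ginv s Hginv) hk kh h_cone k_cone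
              V (conj V0 (conj Vadd Vscal)) h_V k_V (ex_intro _ u0 Hu0)) as [m [HmV HmOm]].
  exists m; unfold is_translation_length in *.
  rewrite (displacements_scaled phi Om Hphi Hphi0) in HmV, HmOm; auto;
    intros u Hu; try destruct Hu as [Hu _]; first [exact Hu | apply (proj1 (HgOm u)), Hu].
Qed.
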